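(* Let $E^*$ be an $s$-$t$ path maximizing $\Lambda(\cdot,P)$ over all directed $s$-$t$ paths, with $d$ edges, and let $b=\max_i|E_2\cap p_i|$. If the initial recursion depth satisfies $I\ge\lceil\log d\rceil$, then the Extended Recursive Greedy algorithm returns an $s$-$t$ path $E_{\mathbf{f}}$ with $\Lambda(E_{\mathbf{f}},P)\ge\frac{1}{(b+1)(\lceil\log d\rceil+1)}\Lambda(E^*,P)$. (Logarithms are base 2.)
   Context: $G=(V,E)$ is a simple directed acyclic graph with capacities $C\in\mathbb{R}_{\ge0}^E$, $s,t\in V$ joined by a directed path, budget $0<\gamma\le\min_eC(e)$. User paths $P=\{p_1,\dots,p_k\}$ are directed paths (edge sets, not necessarily disjoint) with initial values $\lambda_i\ge0$, $\sum_{i:e\in p_i}\lambda_i\le C(e)$. For $A\subseteq E$ let $\tilde C_A(e)=C(e)-\gamma\mathbf{1}_{\{e\in A\}}$; $T(A,P)$ is the optimal value of: maximize $\sum_i\tilde\lambda_i$ s.t. $\sum_{i:e\in p_i}\tilde\lambda_i\le\tilde C_A(e)$ for all $e$, $0\le\tilde\lambda_i\le\lambda_i$; $\Lambda(A,P)=\sum_i\lambda_i-T(A,P)$. $E_1$ (resp. $E_2$) is the set of edges on exactly one (resp. at least two) user paths. $\tilde\lambda^{(1)}_{iA}=\min(\lambda_i,\min_{e\in p_i\cap E_1}\tilde C_A(e))$, $\tilde\lambda^{(2)}_{iA}=\tilde\lambda^{(1)}_{iA}\prod_{e\in p_i\cap E_2,\ \tilde C_A(e)\le\sum_{j:e\in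 p_j}\lambda_j}\frac{\tilde C_A(e)}{\sum_{j:e\in p_j}\lambda_j}$, $\bar\Lambda(A,P)=\sum_i\lambda_i-\sum_i\tilde\lambda^{(2)}_{iA}$. Recursive Greedy algorithm for a set function $F$ on $2^E$, with $F_X(A)=F(A\cup X)-F(X)$: $RG(u_1,u_2,X,i)$ lets $S$ be a shortest (fewest edges) $u_1$-$u_2$ path, returns ''infeasible'' if none exists, returns $S$ if $i=0$, and otherwise sets $best:=S$, $r:=F_X(S)$ and for every $v\in V$ computes $Q_1=RG(u_1,v,X,i-1)$, then $Q_2=RG(v,u_2,X\cup Q_1,i-1)$ (skipping $v$ if infeasible), updating $best:=Q_1\cup Q_2$, $r:=F_X(Q_1\cup Q_2)$ whenever $F_X(Q_1\cup Q_2)>r$; it returns $best$. The output is $RG(s,t,\emptyset,I)$. The Extended Recursive Greedy algorithm is this algorithm run with $F=\bar\Lambda(\cdot,P)$. *)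

From HB Require Import structures.
From mathcomp Require Import all_boot all_order all_algebra.
From mathcomp Require Import classical_sets reals.
Set Implicit Arguments. Unset Strict Implicit. Unset Printing Implicit Defensive.
Import Order.TTheory GRing.Theory Num.Theory.
Local Open Scope ring_scope.

Section Defs.
Variables (V : finType) (g : rel V).

Definition edges : {set V * V} := [set e | g e.1 e.2].

Definition simple_dag : Prop :=
  (forall x, ~~ g x x) /\
  (forall x (p : seq V), path g x p -> last x p = x -> p = [::]).

Definition walk_edges (u : V) (p : seq V) : {set V * V} :=
  [set e in zip (u :: p) p].

Definition is_path (u v : V) (A : {set V * V}) : Prop :=
  exists p : seq V, [/\ path g u p, last u p = v, uniq (u :: p) &
                        A = walk_edges u p].

Definition is_user_path (A : {set V * V}) : Prop :=
  exists u v, is_path u v A /\ (0 < #|A|)%N.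

Variable R : realType.
Variables (C : V * V -> R) (gamma : R).
Variables (k : nat) (P : 'I_k -> {set V * V}) (lam : 'I_k -> R).

Definition Ctil (A : {set V * V}) (e : V * V) : R :=
  C e - gamma * (e \in A)%:R.

Definition lp_feasible (A : {set V * V}) (lt : 'I_k -> R) : Prop :=
  (forall e, e \in edges -> \sum_(i < k | e \in P i) lt i <= Ctil A e) /\
  (forall i, 0 <= lt i <= lam i).

Definition T (A : {set V * V}) : R :=
  sup [set x : R | exists lt, lp_feasible A lt /\ x = \sum_(i < k) lt i].

Definition Lambda (A : {set V * V}) : R := \sum_(i < k) lam i - T A.

Definition npaths (e : V * V) : nat := #|[set i | e \in P i]|.
Definition E1 : {set V * V} := [set e in edges | npaths e == 1%N].
Definition E2 : {set V * V} := [set e in edges | (2 <= npaths e)%N].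

Definition load (e : V * V) : R := \sum_(j < k | e \in P j) lam j.

Definition lam1 (A : {set V * V}) (i : 'I_k) : R :=
  \big[Num.min/lam i]_(e in P i :&: E1) Ctil A e.

Definition lam2 (A : {set V * V}) (i : 'I_k) : R :=
  lam1 A i * \prod_(e in P i :&: E2 | Ctil A e <= load e) (Ctil A e / load e).

Definition Lambda_bar (A : {set V * V}) : R :=
  \sum_(i < k) lam i - \sum_(i < k) lam2 A i.

Definition bmax : nat := \max_(i < k) #|E2 :&: P i|.

End Defs.

Section RG.
Variables (V : finType) (R : realType).
Variable F : {set V * V} -> R.
(* sp u1 u2 : the chosen shortest u1-u2 path (None if none exists). *)
Variable sp : V -> V -> option {set V * V}.
(* the order in which "for every v in V" is iterated *)
Variable ord : seq V.

Definition FX (X A : {set V * V}) : R := F (A :|: X) - F X.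

Fixpoint RG (i : nat) (u1 u2 : V) (X : {set V * V}) : option {set V * V} :=
  match sp u1 u2 with
  | None => None
  | Some S0 =>
    match i with
    | 0%N => Some S0
    | i'.+1 =>
      Some (foldl (fun best v =>
        match RG i' u1 v X with
        | None => best
        | Some Q1 =>
          match RG i' v u2 (X :|: Q1) with
          | None => best
          | Some Q2 =>
              if FX X best < FX X (Q1 :|: Q2) then Q1 :|: Q2 else best
          end
        end) S0 ord)
    end
  end.
End RG.

Definition shortest_path_oracle (V : finType) (g : rel V)
    (sp : V -> V -> option {set V * V}) : Prop :=
  forall u v, match sp u v with
              | Some S0 => is_path g u v S0 /\
                          (forall S', is_path g u v S' -> (#|S0| <= #|S'|)%N)
              | None => forall S1, ~ is_path g u v S1
              end.

From HB Require Import structures.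
From mathcomp Require Import all_boot all_order all_algebra.
From mathcomp Require Import classical_sets reals.
From mathcomp Require Import ring lra.
From mathcomp Require Import finset.
Import Order.TTheory GRing.Theory Num.Theory.
Local Open Scope ring_scope.

Set Implicit Arguments. Unset Strict Implicit. Unset Printing Implicit Defensive.

(* The surrogate Lambda_bar is monotone and submodular: each lam2 A i is a
   product of functions of A (a minimum of reduced capacities, and one capped
   capacity ratio per shared edge) that are nonnegative, nonincreasing and
   supermodular, and this class is closed under products.  For a monotone
   submodular objective, recursive greedy with depth at least ceil(log d)
   loses at most a factor ceil(log d) + 1 against any s-t path with d edges:
   split that path in the middle, compare each half with the corresponding
   recursive call, and add up the marginal gains.  Finally Lambda_bar
   sandwiches Lambda: the flow lam2 is feasible for the LP defining T, so
   Lambda <= Lambda_bar, while every feasible flow loses on each shared edge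
   at least the deficit that lam2 charges there, and a user path meets at
   most b shared edges, so Lambda_bar <= (b + 1) Lambda. *)

Section Walks.
Variables (V : finType) (g : rel V).
Implicit Types (u v w : V) (p : seq V) (A B : {set V * V}).

Lemma walk_edges_nil u : walk_edges u [::] = set0.
Proof. by apply/setP=> e; rewrite !inE. Qed.

Lemma walk_edges_cons u x p : walk_edges u (x :: p) = (u, x) |: walk_edges x p.
Proof. by apply/setP=> e; rewrite !inE. Qed.

Lemma walk_edges_cat u p1 p2 :
  walk_edges u (p1 ++ p2) = walk_edges u p1 :|: walk_edges (last u p1) p2.
Proof.
elim: p1 u => [|x p1 IH] u /=; first by rewrite walk_edges_nil set0U.
by rewrite !walk_edges_cons IH setUA.
Qed.

Lemma walk_edges_fst u p e : e \in walk_edges u p -> e.1 \in u :: p.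
Proof.
elim: p u => [|x p IH] u; first by rewrite walk_edges_nil inE.
rewrite walk_edges_cons in_setU1 => /predU1P[-> | /IH xp]; first exact: mem_head.
by rewrite inE xp orbT.
Qed.

Lemma card_walk_edges u p : uniq (u :: p) -> #|walk_edges u p| = size p.
Proof.
elim: p u => [|x p IH] u /=; first by rewrite walk_edges_nil cards0.
move=> /and3P[up xp Up]; rewrite walk_edges_cons cardsU1 IH /= ?xp //.
suff -> : (u, x) \notin walk_edges x p by [].
by apply: contra up => /walk_edges_fst.
Qed.

Lemma uniq_cat_acyclic u p1 p2 : simple_dag g ->
  path g u p1 -> path g (last u p1) p2 ->
  uniq (u :: p1) -> uniq (last u p1 :: p2) -> uniq (u :: p1 ++ p2).
Proof.
move=> [_ acyclic] gp1 gp2 U1; rewrite cons_uniq => /andP[_ U2].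
rewrite -cat_cons cat_uniq U1 U2 andbT; apply/hasPn=> x xp2; apply/negP=> xp1.
case/splitPl: p1 / xp1 gp1 gp2 {U1} => q1 q2 x_last.
rewrite cat_path last_cat x_last => /andP[_ gq2].
case/path.splitP: xp2 U2 => r1 r2 _; rewrite cat_path => /andP[gr1 _].
have := acyclic x (q2 ++ rcons r1 x).
rewrite cat_path gq2 gr1 last_cat last_rcons => /(_ isT erefl).
by move=> /(congr1 size); rewrite size_cat size_rcons addnS.
Qed.

Lemma is_path_cat u v w A B : simple_dag g ->
  is_path g u v A -> is_path g v w B -> is_path g u w (A :|: B).
Proof.
move=> dag [p1 [gp1 <- U1 ->]] [p2 [gp2 <- U2 ->]].
exists (p1 ++ p2); split.
- by rewrite cat_path gp1 gp2.
- by rewrite last_cat.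
- exact: uniq_cat_acyclic.
- by rewrite walk_edges_cat.
Qed.

Lemma is_path_split u w A m : is_path g u w A ->
  exists v A1 A2, [/\ is_path g u v A1, is_path g v w A2, A = A1 :|: A2,
                      #|A1| = minn m #|A| & #|A2| = (#|A| - m)%N].
Proof.
move=> [p [gp <- U ->]]; rewrite card_walk_edges //.
rewrite -(cat_take_drop m p) in gp U; set p1 := take m p; set p2 := drop m p.
move: gp; rewrite cat_path => /andP[gp1 gp2].
move: U; rewrite -cat_cons cat_uniq => /and3P[U1 p12 U2].
have U2' : uniq (last u p1 :: p2).
  rewrite cons_uniq U2 andbT; apply/negP=> lp2.
  by move/hasPn: p12 => /(_ _ lp2); rewrite /= mem_last.
exists (last u p1), (walk_edges u p1), (walk_edges (last u p1) p2); split.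
- by exists p1.
- by exists p2; split=> //; rewrite -last_cat cat_take_drop.
- by rewrite -walk_edges_cat cat_take_drop.
- by rewrite card_walk_edges // size_take_min.
- by rewrite card_walk_edges // size_drop.
Qed.

Lemma is_path_card_le1 u v A : is_path g u v A -> (#|A| <= 1)%N ->
  A = if u == v then set0 else [set (u, v)].
Proof.
move=> [p [_ <- U ->]]; rewrite card_walk_edges //.
case: p U => [|x [|y p]] //= U _; first by rewrite eqxx walk_edges_nil.
rewrite walk_edges_cons walk_edges_nil setU0.
by move: U; rewrite /= inE andbT => /negPf ->.
Qed.

End Walks.

Section Foldl.
Variables (T : Type) (S : eqType) (d : Order.disp_t) (R : porderType d).
Variables (f : T -> S -> T) (h : T -> R).
Hypothesis h_step : forall b v, (h b <= h (f b v))%O.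

Lemma foldl_ge b s : (h b <= h (foldl f b s))%O.
Proof. by elim: s b => //= v s IH b; apply: le_trans (IH _). Qed.

Lemma foldl_ge_step b s v c :
  v \in s -> (forall b', c <= h (f b' v))%O -> (c <= h (foldl f b s))%O.
Proof.
elim: s b => //= x s IH b; rewrite inE => /predU1P[-> cle | /IH]; last exact.
exact: le_trans (cle b) (foldl_ge _ _).
Qed.

End Foldl.

Lemma foldl_ind (T S : Type) (f : T -> S -> T) (Q : T -> Prop) b s :
  (forall b v, Q b -> Q (f b v)) -> Q b -> Q (foldl f b s).
Proof. by move=> Qf; elim: s b => //= v s IH b Qb; apply/IH/Qf. Qed.

Section Increments.
Variables (V : finType) (R : realType) (F : {set V * V} -> R).
Implicit Types X Y A B : {set V * V}.
Hypothesis F_mono : forall A B, A \subset B -> F A <= F B.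
Hypothesis FX_antitone : forall X Y A, X \subset Y -> FX F Y A <= FX F X A.

Lemma FX_ge0 X A : 0 <= FX F X A.
Proof. by rewrite subr_ge0; apply/F_mono/subsetUr. Qed.

Lemma le_FX X A B : A \subset B -> FX F X A <= FX F X B.
Proof. by move=> AB; rewrite lerB //; apply/F_mono/setSU. Qed.

Lemma FXU X A B : FX F X (A :|: B) = FX F X A + FX F (X :|: A) B.
Proof. rewrite /FX [X :|: A]setUC -setUA setUCA; lra. Qed.

(* Compare A1 :|: A2 with Q1 :|: A1 :|: A2, then peel off Q1, A1 and A2 in turn. *)
Lemma FX_concat_le X A1 A2 Q1 Q2 n : 0 <= n ->
  FX F X A1 <= n * FX F X Q1 -> FX F (X :|: Q1) A2 <= n * FX F (X :|: Q1) Q2 ->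
  FX F X (A1 :|: A2) <= (n + 1) * FX F X (Q1 :|: Q2).
Proof.
move=> n0 A1Q1 A2Q2.
have le1 : FX F X (A1 :|: A2) <= FX F X (Q1 :|: (A1 :|: A2)) by apply/le_FX/subsetUr.
have le2 := FX_antitone A1 (subsetUl X Q1).
have le3 := FX_antitone A2 (subsetUl (X :|: Q1) A1).
have le4 : FX F X Q1 <= FX F X (Q1 :|: Q2) by apply/le_FX/subsetUl.
move: le1; rewrite !FXU in le4 *.
have := FX_ge0 (X :|: Q1) Q2; nra.
Qed.

End Increments.

Section RecursiveGreedy.
Variables (V : finType) (g : rel V) (R : realType) (F : {set V * V} -> R).
Variables (sp : V -> V -> option {set V * V}) (ord : seq V).
Hypothesis dag : simple_dag g.
Hypothesis sp_shortest : shortest_path_oracle g sp.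
Implicit Types (u v : V) (X Y A B Q : {set V * V}).

Local Notation RG := (RG F sp ord).

Definition rg_step i u1 u2 X best v : {set V * V} :=
  match RG i u1 v X with
  | None => best
  | Some Q1 =>
    match RG i v u2 (X :|: Q1) with
    | None => best
    | Some Q2 => if FX F X best < FX F X (Q1 :|: Q2) then Q1 :|: Q2 else best
    end
  end.

Lemma RG0 u1 u2 X : RG 0 u1 u2 X = sp u1 u2.
Proof. by rewrite /=; case: sp. Qed.

Lemma RGS i u1 u2 X :
  RG i.+1 u1 u2 X = omap (fun S0 => foldl (rg_step i u1 u2 X) S0 ord) (sp u1 u2).
Proof. by []. Qed.

Lemma RG_is_path i u1 u2 X Q : RG i u1 u2 X = Some Q -> is_path g u1 u2 Q.
Proof.
elim: i u1 u2 X Q => [|i IH] u1 u2 X Q; have := sp_shortest u1 u2.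
  by rewrite RG0; case: sp => // S0 [pS0 _] [<-].
rewrite RGS; case: sp => // S0 [pS0 _] [<-].
apply: foldl_ind pS0 => b v pb; rewrite /rg_step.
case RG1: (RG i u1 v X) => [Q1|] //; case RG2: RG => [Q2|] //.
by case: ifP => // _; apply: is_path_cat dag (IH _ _ _ _ RG1) (IH _ _ _ _ RG2).
Qed.

Lemma sp_card_le1 u v A : is_path g u v A -> (#|A| <= 1)%N -> sp u v = Some A.
Proof.
move=> pA A1; have := sp_shortest u v; case: sp => [S0 [pS0 /(_ _ pA) S0A] | /(_ _ pA)] //.
by rewrite (is_path_card_le1 pA A1) (is_path_card_le1 pS0 (leq_trans S0A A1)).
Qed.

Hypothesis F_mono : forall A B, A \subset B -> F A <= F B.
Hypothesis FX_antitone : forall X Y A, X \subset Y -> FX F Y A <= FX F X A.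
Hypothesis ord_total : forall v, v \in ord.

Lemma FX_rg_step i u1 u2 X best v : FX F X best <= FX F X (rg_step i u1 u2 X best v).
Proof.
rewrite /rg_step; case: RG => [Q1|] //; case: RG => [Q2|] //.
by case: ifP => // /ltW.
Qed.

Lemma FX_rg_step_candidate i u1 u2 X best v Q1 Q2 :
  RG i u1 v X = Some Q1 -> RG i v u2 (X :|: Q1) = Some Q2 ->
  FX F X (Q1 :|: Q2) <= FX F X (rg_step i u1 u2 X best v).
Proof. by rewrite /rg_step => -> ->; case: ltP. Qed.

Lemma RG_approx i j u1 u2 X A : (j <= i)%N -> is_path g u1 u2 A -> (#|A| <= 2 ^ j)%N ->
  exists Q, RG i u1 u2 X = Some Q /\ FX F X A <= j.+1%:R * FX F X Q.
Proof.
elim: i j u1 u2 X A => [|i IH] [|j] // u1 u2 X A ji pA cardA.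
- by exists A; rewrite RG0 (sp_card_le1 pA cardA) mul1r.
- rewrite RGS (sp_card_le1 pA cardA) /=; eexists; split; first by [].
  by rewrite mul1r; apply: foldl_ge; apply: FX_rg_step.
have [S0 sp0] : exists S0, sp u1 u2 = Some S0.
  by move: (sp_shortest u1 u2); case: sp => [S0 _|/(_ _ pA)//]; exists S0.
rewrite RGS sp0 /=; eexists; split; first by [].
have [v [A1 [A2 [pA1 pA2 eA cA1 cA2]]]] := is_path_split (2 ^ j) pA.
have cA1j : (#|A1| <= 2 ^ j)%N by rewrite cA1 geq_minl.
have cA2j : (#|A2| <= 2 ^ j)%N by rewrite cA2 leq_subLR addnn -mul2n -expnS.
have [Q1 [RG1 A1Q1]] := IH j u1 v X A1 ji pA1 cA1j.
have [Q2 [RG2 A2Q2]] := IH j v u2 (X :|: Q1) A2 ji pA2 cA2j.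
rewrite eA; apply: le_trans (FX_concat_le F_mono FX_antitone (ler0n _ _) A1Q1 A2Q2) _.
rewrite natr1 ler_wpM2l //; apply: foldl_ge_step (ord_total v) _ => //.
  exact: FX_rg_step.
by move=> b; apply: FX_rg_step_candidate RG1 RG2.
Qed.

End RecursiveGreedy.

Section AntitoneSupermodular.
Variables (T : finType) (R : realDomainType).
Implicit Types (X Y S A B : {set T}) (h : {set T} -> R).

Definition nonneg_antitone_supermodular h :=
  [/\ forall A, 0 <= h A,
      forall X Y, X \subset Y -> h Y <= h X &
      forall X Y S, X \subset Y -> h Y - h (S :|: Y) <= h X - h (S :|: X)].

Lemma eq_nonneg_antitone_supermodular h h' :
  h =1 h' -> nonneg_antitone_supermodular h -> nonneg_antitone_supermodular h'.
Proof. by move=> hh' [h0 hanti hsup]; split=> *; rewrite -!hh'; auto. Qed.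

Lemma nonneg_antitone_supermodular1 : nonneg_antitone_supermodular (fun=> 1).
Proof. by split=> *; rewrite ?subrr. Qed.

Lemma nonneg_antitone_supermodularM h1 h2 :
  nonneg_antitone_supermodular h1 -> nonneg_antitone_supermodular h2 ->
  nonneg_antitone_supermodular (fun A => h1 A * h2 A).
Proof.
move=> [a1 b1 c1] [a2 b2 c2]; split=> [A|X Y XY|X Y S XY]; first exact: mulr_ge0.
  by apply: ler_pM; auto.
have SXY : S :|: X \subset S :|: Y by apply: setUS.
have := c1 X Y S XY; have := c2 X Y S XY.
have := b1 _ _ XY; have := b2 _ _ XY; have := b1 _ _ SXY; have := b2 _ _ SXY.
have := b1 Y (S :|: Y) (subsetUr _ _); have := b2 Y (S :|: Y) (subsetUr _ _).
have := a1 Y; have := a2 Y; have := a1 (S :|: Y); have := a2 (S :|: Y).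
have := a1 X; have := a2 X; have := a1 (S :|: X); have := a2 (S :|: X).
nra.
Qed.

Lemma nonneg_antitone_supermodular_prod (I : Type) (r : seq I) (Q : pred I)
    (hs : I -> {set T} -> R) :
  (forall i, Q i -> nonneg_antitone_supermodular (hs i)) ->
  nonneg_antitone_supermodular (fun A => \prod_(i <- r | Q i) hs i A).
Proof.
move=> hsQ; elim: r => [|i r IH].
  by apply: eq_nonneg_antitone_supermodular nonneg_antitone_supermodular1 => A; rewrite big_nil.
case Qi: (Q i); last first.
  by apply: eq_nonneg_antitone_supermodular IH => A; rewrite big_cons Qi.
apply: eq_nonneg_antitone_supermodular (nonneg_antitone_supermodularM (hsQ i Qi) IH).
by move=> A; rewrite big_cons Qi.
Qed.

Lemma nonneg_antitone_supermodular_minU h : (forall A, 0 <= h A) ->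
  (forall A B, h (A :|: B) = Num.min (h A) (h B)) -> nonneg_antitone_supermodular h.
Proof.
move=> h0 hU; have anti X Y : X \subset Y -> h Y <= h X.
  by move/setUidPr <-; rewrite hU ge_min lexx.
split=> // X Y S /anti YX; rewrite !hU.
by case: (leP (h S) (h Y)); case: (leP (h S) (h X)) => *; rewrite ?subrr; lra.
Qed.

Lemma one_sub_prod_le_sum (I : Type) (r : seq I) (Q : pred I) (F : I -> R) :
  (forall i, Q i -> 0 <= F i <= 1) ->
  1 - \prod_(i <- r | Q i) F i <= \sum_(i <- r | Q i) (1 - F i).
Proof.
move=> F01; elim: r => [|i r IH]; first by rewrite !big_nil subrr.
rewrite !big_cons; case: ifP => // Qi.
have /andP[Fi0 Fi1] := F01 i Qi.
have /andP[p0 p1] : 0 <= \prod_(j <- r | Q j) F j <= 1.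
  by rewrite prodr_ge0 ?prodr_ile1 // => j /F01 /andP[].
nra.
Qed.

End AntitoneSupermodular.

Section LPBounds.
Variables (V : finType) (g : rel V) (R : realType) (C : V * V -> R) (gamma : R).
Variables (k : nat) (P : 'I_k -> {set V * V}) (lam : 'I_k -> R).
Hypothesis gamma_gt0 : 0 < gamma.
Hypothesis gamma_le_C : forall e, e \in edges g -> gamma <= C e.
Hypothesis lam_ge0 : forall i, 0 <= lam i.
Hypothesis load_le_C : forall e, e \in edges g -> load P lam e <= C e.
Implicit Types (X Y A B : {set V * V}) (e : V * V) (i : 'I_k).

Local Notation Ct := (Ctil C gamma).
Local Notation ld := (load P lam).
Local Notation l1 := (lam1 g C gamma P lam).
Local Notation l2 := (lam2 g C gamma P lam).
Local Notation E1 := (E1 g P).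
Local Notation E2 := (E2 g P).
Local Notation b1 := ((bmax g P)%:R + 1 : R).

Lemma Ctil_ge0 A e : e \in edges g -> 0 <= Ct A e.
Proof.
move/gamma_le_C; rewrite /Ctil; have := gamma_gt0.
by case: (e \in A); rewrite /= ?mulr1 ?mulr0; lra.
Qed.

Lemma CtilU A B e : Ct (A :|: B) e = Num.min (Ct A e) (Ct B e).
Proof.
rewrite /Ctil inE; have := gamma_gt0.
case: (e \in A); case: (e \in B); rewrite /= ?mulr1 ?mulr0 ?subr0 ?minxx // => g0.
  by rewrite min_l //; lra.
by rewrite min_r //; lra.
Qed.

Lemma load_ge0 e : 0 <= ld e.
Proof. exact: sumr_ge0. Qed.

Lemma E1_edges e : e \in E1 -> e \in edges g.
Proof. by rewrite inE => /andP[]. Qed.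

Lemma E2_edges e : e \in E2 -> e \in edges g.
Proof. by rewrite inE => /andP[]. Qed.

Definition cap_ratio A e := if Ct A e <= ld e then Ct A e / ld e else 1.

Lemma lam2E A i : l2 A i = l1 A i * \prod_(e in P i :&: E2) cap_ratio A e.
Proof. by rewrite /lam2 big_mkcondr. Qed.

Lemma cap_ratio_ge0_le1 A e : e \in edges g -> 0 <= cap_ratio A e <= 1.
Proof.
move=> eg; rewrite /cap_ratio; case: ifP => [Cle|_]; last by rewrite ler01 lexx.
have Ct0 := Ctil_ge0 A eg; have [->|ld0] := eqVneq (ld e) 0.
  by rewrite invr0 mulr0 lexx ler01.
have ldp : 0 < ld e by rewrite lt_def ld0 load_ge0.
by rewrite divr_ge0 ?ler_pdivrMr // ?mul1r ?load_ge0.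
Qed.

(* Off A the reduced capacity is C e >= load e, so the factor can only be 1. *)
Lemma cap_ratio_mem A e : e \in edges g ->
  cap_ratio A e = if e \in A then cap_ratio [set e] e else 1.
Proof.
move=> eg; rewrite /cap_ratio /Ctil in_set1 eqxx.
case: (e \in A) => //; rewrite mulr0 subr0; case: ifP => // CleL.
have -> : ld e = C e by apply/eqP; rewrite eq_le CleL load_le_C.
by rewrite divff // gt_eqF // (lt_le_trans gamma_gt0) ?gamma_le_C.
Qed.

Lemma prod_cap_ratio_ge0_le1 A (Q : pred (V * V)) :
  (forall e, Q e -> e \in edges g) -> 0 <= \prod_(e | Q e) cap_ratio A e <= 1.
Proof.
move=> Qg; have r01 e : Q e -> 0 <= cap_ratio A e <= 1 by move/Qg/cap_ratio_ge0_le1.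
by rewrite prodr_ge0 ?prodr_ile1 // => e /r01 /andP[].
Qed.

Lemma prod_cap_ratio_E2_ge0_le1 A i :
  0 <= \prod_(e in P i :&: E2) cap_ratio A e <= 1.
Proof. by apply: prod_cap_ratio_ge0_le1 => e; rewrite inE => /andP[_ /E2_edges]. Qed.

Lemma lam1U A B i : l1 (A :|: B) i = Num.min (l1 A i) (l1 B i).
Proof. by rewrite /lam1 -bigmin_split; apply: eq_bigr => e _; rewrite CtilU. Qed.

Lemma lam1_ge0 A i : 0 <= l1 A i.
Proof.
apply: le_bigmin => // e; rewrite inE => /andP[_ /E1_edges].
exact: Ctil_ge0.
Qed.

Lemma lam1_le A i : l1 A i <= lam i.
Proof. exact: bigmin_le_id. Qed.

Lemma lam2_nonneg_antitone_supermodular i :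
  nonneg_antitone_supermodular (fun A => l2 A i).
Proof.
apply: eq_nonneg_antitone_supermodular (fun A => esym (lam2E A i)) _.
apply: nonneg_antitone_supermodularM.
  by apply: nonneg_antitone_supermodular_minU => [A|A B]; [apply: lam1_ge0 | apply: lam1U].
apply: nonneg_antitone_supermodular_prod => e; rewrite inE => /andP[_ /E2_edges eg].
apply: eq_nonneg_antitone_supermodular (fun A => esym (cap_ratio_mem A eg)) _.
have /andP[r0 r1] := cap_ratio_ge0_le1 [set e] eg.
apply: nonneg_antitone_supermodular_minU => [A|A B]; first by case: ifP.
by rewrite inE; do 2 case: (e \in _); rewrite /= ?minxx // ?(min_l r1) ?(min_r r1).
Qed.

Lemma lam2_le_lam1 A i : l2 A i <= l1 A i.
Proof.
rewrite lam2E; have /andP[q0 q1] := prod_cap_ratio_E2_ge0_le1 A i.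
by rewrite ler_piMr ?lam1_ge0.
Qed.

Lemma lam2_ge0_le A i : 0 <= l2 A i <= lam i.
Proof.
rewrite (le_trans (lam2_le_lam1 A i) (lam1_le A i)) andbT lam2E.
by rewrite mulr_ge0 ?lam1_ge0 //; have /andP[] := prod_cap_ratio_E2_ge0_le1 A i.
Qed.

Lemma lam2_le_cap_ratio A i e : e \in P i -> e \in E2 -> l2 A i <= lam i * cap_ratio A e.
Proof.
move=> ePi eE2; have ei : e \in P i :&: E2 by rewrite inE ePi.
have /andP[r0 r1] := cap_ratio_ge0_le1 A (E2_edges eE2).
have /andP[q0 q1] : 0 <= \prod_(e' in P i :&: E2 | e' != e) cap_ratio A e' <= 1.
  by apply: prod_cap_ratio_ge0_le1 => e'; rewrite inE => /andP[/andP[_ /E2_edges]].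
rewrite lam2E (bigD1 e ei) /= ler_pM ?lam1_ge0 ?mulr_ge0 ?lam1_le //.
exact: ler_piMr.
Qed.

Lemma load_mul_cap_ratio A e : e \in edges g -> ld e * cap_ratio A e <= Ct A e.
Proof.
move=> eg; rewrite /cap_ratio; case: ifP => [_|/negbT]; last by rewrite -ltNge mulr1 => /ltW.
have [->|ld0] := eqVneq (ld e) 0; first by rewrite mul0r Ctil_ge0.
by rewrite mulrC divfK.
Qed.

Lemma sum_npaths0 e (f : 'I_k -> R) :
  npaths P e = 0%N -> \sum_(i < k | e \in P i) f i = 0.
Proof.
move/cards0_eq => /setP none; apply: big_pred0 => j.
by have := none j; rewrite !inE.
Qed.

Lemma npaths1P e : npaths P e = 1%N -> exists i0, forall j, (e \in P j) = (j == i0).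
Proof.
move/eqP/cards1P => [i0 /setP one]; exists i0 => j.
by have := one j; rewrite !inE.
Qed.

Lemma lam2_feasible A : lp_feasible g C gamma P lam A (l2 A).
Proof.
split=> [e eg|]; last exact: lam2_ge0_le.
case: (ltngtP (npaths P e) 1) => [|n2|/[dup] n1 /npaths1P [i0 one]].
- by rewrite ltnS leqn0 => /eqP/sum_npaths0 ->; apply: Ctil_ge0.
- have eE2 : e \in E2 by rewrite in_set n2 andbT.
  apply: le_trans (load_mul_cap_ratio A eg); rewrite /load mulr_suml ler_sum // => i ePi.
  exact: lam2_le_cap_ratio.
- have eE1 : e \in P i0 :&: E1 by rewrite in_setI in_set one eqxx n1 andbT.
  rewrite (big_pred1 i0) //; apply: le_trans (lam2_le_lam1 A i0) _.
  exact: bigmin_le_cond.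
Qed.

Local Notation LB := (Lambda_bar g C gamma P lam).

Lemma Lambda_bar_mono A B : A \subset B -> LB A <= LB B.
Proof.
move=> AB; rewrite lerB // ler_sum // => i _.
by have [_ anti _] := lam2_nonneg_antitone_supermodular i; apply: anti.
Qed.

Lemma FX_Lambda_bar_antitone X Y A : X \subset Y -> FX LB Y A <= FX LB X A.
Proof.
move=> XY; rewrite /FX /Lambda_bar.
have sub_sub a x y : a - x - (a - y) = y - x :> R by ring.
rewrite !sub_sub -!sumrB ler_sum // => i _.
by have [_ _ supm] := lam2_nonneg_antitone_supermodular i; apply: supm.
Qed.

Lemma Lambda_bar_ge0 A : 0 <= LB A.
Proof.
by rewrite subr_ge0 ler_sum // => i _; have /andP[] := lam2_ge0_le A i.
Qed.

Section FeasibleFlows.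
Variables (A : {set V * V}) (lt : 'I_k -> R).
Hypothesis lt_feasible : lp_feasible g C gamma P lam A lt.

Lemma feasible_le_lam1 i : lt i <= l1 A i.
Proof.
have [cap bnd] := lt_feasible; apply: le_bigmin => [|e]; first by case/andP: (bnd i).
rewrite in_setI in_set => /and3P[ePi eg /eqP/npaths1P [i0 one]].
move: (cap e eg); rewrite (big_pred1 i0) //.
by move: ePi; rewrite one => /eqP ->.
Qed.

Lemma feasible_deficit e : e \in E2 ->
  (1 - cap_ratio A e) * ld e <= \sum_(i < k | e \in P i) (lam i - lt i).
Proof.
rewrite in_set => /andP[eg _]; have [cap bnd] := lt_feasible.
have slack0 : 0 <= \sum_(i < k | e \in P i) (lam i - lt i).
  by apply: sumr_ge0 => i _; rewrite subr_ge0; case/andP: (bnd i).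
rewrite sumrB -/(load P lam e) in slack0 *; have := cap e eg.
rewrite /cap_ratio; case: ifP => _; last by rewrite subrr mul0r.
have [ld0|ld0] := eqVneq (ld e) 0; first by rewrite ld0 mulr0 in slack0 *.
rewrite mulrBl mul1r divfK //; lra.
Qed.

End FeasibleFlows.

Lemma lam_sub_lam2 A i : lam i - l2 A i <=
  (lam i - l1 A i) + lam i * \sum_(e in P i :&: E2) (1 - cap_ratio A e).
Proof.
have r01 e : e \in P i :&: E2 -> 0 <= cap_ratio A e <= 1.
  by rewrite inE => /andP[_ /E2_edges /cap_ratio_ge0_le1].
have := one_sub_prod_le_sum (index_enum _) r01.
have /andP[q0 q1] := prod_cap_ratio_E2_ge0_le1 A i.
rewrite lam2E; have := lam1_ge0 A i; have := lam1_le A i; have := lam_ge0 i.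
nra.
Qed.

Lemma sum_paths_E2_exchange (a : 'I_k -> R) (w : V * V -> R) :
  \sum_(i < k) a i * \sum_(e in P i :&: E2) w e =
  \sum_(e in E2) w e * \sum_(i < k | e \in P i) a i.
Proof.
under eq_bigr do rewrite mulr_sumr; under [RHS]eq_bigr do rewrite mulr_sumr.
rewrite (exchange_big_dep (fun e => e \in E2)) => [|i e _]; last by rewrite inE => /andP[].
apply: eq_bigr => e eE2; apply: eq_big => [i|i _]; last by rewrite mulrC.
by rewrite inE eE2 andbT.
Qed.

Lemma card_E2_le_bmax i : (#|P i :&: E2| <= bmax g P)%N.
Proof. by rewrite setIC; apply: leq_bigmax. Qed.

Lemma Lambda_bar_le_feasible A lt : lp_feasible g C gamma P lam A lt ->
  LB A <= b1 * (\sum_(i < k) lam i - \sum_(i < k) lt i).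
Proof.
move=> feas; rewrite /Lambda_bar -!sumrB.
apply: le_trans (ler_sum _ (fun i _ => lam_sub_lam2 A i)) _.
rewrite big_split /= sum_paths_E2_exchange mulrDl mul1r [X in _ <= X]addrC.
apply: lerD; first by apply: ler_sum => i _; rewrite lerB ?feasible_le_lam1.
apply: le_trans (_ : _ <= \sum_(e in E2) 1 * \sum_(i < k | e \in P i) (lam i - lt i)) _.
  by apply: ler_sum => e /(feasible_deficit feas); rewrite mul1r.
rewrite -sum_paths_E2_exchange mulr_sumr ler_sum // => i _.
have [_ /(_ i) /andP[_ lti]] := feas.
rewrite sumr_const mulrC ler_wpM2r ?subr_ge0 // ler_nat.
exact: card_E2_le_bmax.
Qed.

Local Notation Lam := (Lambda g C gamma P lam).

Lemma sum_lam2_le_T A : \sum_(i < k) l2 A i <= T g C gamma P lam A.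
Proof.
rewrite /T; apply: sup_upper_bound; last by exists (l2 A); split; first exact: lam2_feasible.
split; first by exists (\sum_(i < k) l2 A i), (l2 A); split; first exact: lam2_feasible.
exists (\sum_(i < k) lam i) => _ [lt [[_ bnd] ->]].
by apply: ler_sum => i _; case/andP: (bnd i).
Qed.

Lemma T_le A : T g C gamma P lam A <= \sum_(i < k) lam i - LB A / b1.
Proof.
have b1_gt0 : 0 < b1 by rewrite ltr_pwDr.
rewrite /T; apply: ge_sup.
  by exists (\sum_(i < k) l2 A i), (l2 A); split; first exact: lam2_feasible.
move=> _ [lt [/Lambda_bar_le_feasible LBle ->]].
by rewrite lerBrDr addrC -lerBrDr ler_pdivrMr // mulrC.
Qed.

Lemma Lambda_le_Lambda_bar A : Lam A <= LB A.
Proof. by rewrite lerB // sum_lam2_le_T. Qed.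

Lemma Lambda_bar_le_Lambda A : LB A <= b1 * Lam A.
Proof.
have b1_gt0 : 0 < b1 by rewrite ltr_pwDr.
by rewrite mulrC -ler_pdivrMr // /Lambda lerBrDr addrC -lerBrDr T_le.
Qed.

End LPBounds.

Theorem theorem2 (V : finType) (g : rel V) (R : realType)
    (C : V * V -> R) (gamma : R) (s t : V)
    (k : nat) (P : 'I_k -> {set V * V}) (lam : 'I_k -> R)
    (sp : V -> V -> option {set V * V}) (ord : seq V) (I : nat)
    (Estar : {set V * V}) :
  simple_dag g ->
  (forall e, e \in edges g -> 0 <= C e) ->
  s != t -> (exists A, is_path g s t A) ->
  0 < gamma -> (forall e, e \in edges g -> gamma <= C e) ->
  (forall i, is_user_path g (P i)) ->
  (forall i, 0 <= lam i) ->
  (forall e, e \in edges g -> load P lam e <= C e) ->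
  shortest_path_oracle g sp ->
  perm_eq ord (enum V) ->
  is_path g s t Estar ->
  (forall A, is_path g s t A ->
     Lambda g C gamma P lam A <= Lambda g C gamma P lam Estar) ->
  (up_log 2 #|Estar| <= I)%N ->
  exists Ef,
    RG (Lambda_bar g C gamma P lam) sp ord I s t (finset.set0 : {set V * V}) = Some Ef /\
    is_path g s t Ef /\
    Lambda g C gamma P lam Estar /
      (((bmax g P)%:R + 1) * ((up_log 2 #|Estar|)%:R + 1))
    <= Lambda g C gamma P lam Ef.
Proof.
move=> dag _ _ _ gamma_gt0 gamma_le_C _ lam_ge0 load_le_C sp_shortest ord_perm pEstar _ logI.
have ord_total v : v \in ord by rewrite (perm_mem ord_perm) mem_enum.
have [Ef [RGEf approx]] := RG_approx sp_shortest
  (Lambda_bar_mono gamma_gt0 gamma_le_C lam_ge0 load_le_C)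
  (FX_Lambda_bar_antitone gamma_gt0 gamma_le_C lam_ge0 load_le_C)
  ord_total set0 logI pEstar (up_logP #|Estar| (ltnSn 1)).
exists Ef; split=> //; split; first exact: RG_is_path RGEf.
move: approx; rewrite /FX !setU0 -natr1.
have := Lambda_le_Lambda_bar P gamma_gt0 gamma_le_C lam_ge0 Estar.
have := Lambda_bar_le_Lambda P gamma_gt0 gamma_le_C lam_ge0 Ef.
have := Lambda_bar_ge0 P gamma_gt0 gamma_le_C lam_ge0 set0.
rewrite ler_pdivrMr ?mulr_gt0 ?ltr_pwDr //.
have := ler0n R (up_log 2 #|Estar|); have := ler0n R (bmax g P).
nra.
Qed.
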